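(* Let $G(q)$ be a finite Chevalley group over $\mathbb{F}_q$ and let $P\subset G(q)$ be a proper parabolic subgroup. Then for any nonempty set $A\subseteq G(q)$ one has either $$|AP|\,|A\cap P| \ge 2^{-1}|A|^2 \quad\text{or}\quad |AP|\,|PA|\ge 2^{-2}|A||P|q.$$ In particular, $$\max\{|AP|,|PA|\}\ge 2^{-1}\min\{|A|^2|A\cap P|^{-1},\,(|A||P|q)^{1/2}\}$$ (with $|A|^2|A\cap P|^{-1}=+\infty$ when $A\cap P=\emptyset$). Similarly, $$|APA|\ge \frac{|P|}{4}\cdot\min\{q,\; |A|^4\sigma_P(A^{-1},A)^{-1}\sigma_P(A,A^{-1})^{-1}\}.$$ Moreover, if $B\subseteq P$ is a Borel subgroup with $P=BW_JB$ and $A\not\subseteq P$, then $|PAB|\ge q|P|$.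
   Context: $G(q)$ is a (possibly twisted) finite Chevalley group over the finite field $\mathbb{F}_q$ with its BN-pair structure (Borel subgroup $B$, Weyl group $W$); a parabolic subgroup is a subgroup containing a Borel subgroup, equivalently a conjugate of some $P_J=BW_JB$ where $W_J$ is the subgroup of $W$ generated by a subset $J$ of the fundamental reflections. For sets $X,Y$ in a group, $XY=\{xy\}$, $X^{-1}=\{x^{-1}\}$, $r_{XY}(z)$ is the number of pairs $(x,y)\in X\times Y$ with $xy=z$, and for a set $S$, $\sigma_S(X,Y)=\sum_{z\in S} r_{XY}(z)$. *)

From mathcomp Require Import all_boot all_order all_algebra all_fingroup.
Set Implicit Arguments. Unset Strict Implicit. Unset Printing Implicit Defensive.
Import GRing.Theory Num.Theory.

Local Open Scope group_scope.

Definition rXY (gT : finGroupType) (X Y : {set gT}) (z : gT) : nat :=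
  #|[set p : gT * gT | (p.1 \in X) && (p.2 \in Y) && (p.1 * p.2 == z)]|.

Definition sigmaS (gT : finGroupType) (S X Y : {set gT}) : nat :=
  (\sum_(z in S) rXY X Y z)%N.

(* (B,N) is a BN-pair (Tits system) of G, with T = B :&: N and the
   distinguished generators of W = N/T represented by the set S of
   elements of N (an element s of S stands for the coset sT). *)
Definition is_BN_pair (gT : finGroupType) (G B N : {group gT}) (S : {set gT}) : Prop :=
  [/\ G :=: <<B :|: N>>,
      (B :&: N) <| N,
      [/\ S \subset N,
          {in S, forall s, s \notin B :&: N /\ s * s \in B :&: N}
        & N :=: <<S :|: (B :&: N)>>],
      (forall s n, s \in S -> n \in N ->
          ((s *: B :* n) \subset ((B :* n * B) :|: (B :* (s * n) * B))))
    & {in S, forall s, B :^ s != B}].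

(* The BN-pair has all rank-one parameters at least q: |BsB| >= q|B|.
   (This is what "over F_q" provides for (twisted) Chevalley groups.) *)
Definition BN_params_ge (gT : finGroupType) (B : {set gT}) (S : {set gT}) (q : nat) : Prop :=
  {in S, forall s, (q * #|B| <= #|(B :* s * B)%g|)%N}.

(* preimage in N of W_J = <J> for J a subset of S *)
Definition WJ (gT : finGroupType) (B N : {set gT}) (J : {set gT}) : {set gT} :=
  <<J :|: (B :&: N)>>.

Definition PJ (gT : finGroupType) (B N : {set gT}) (J : {set gT}) : {set gT} :=
  B * WJ B N J * B.

Definition parabolic (gT : finGroupType) (G B P : {set gT}) : Prop :=
  P \subset G /\ exists2 g, g \in G & B :^ g \subset P.

From mathcomp Require Import all_boot all_order all_algebra all_fingroup.
From mathcomp Require Import zify ring lra.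
Import Order.TTheory GRing.Theory Num.Theory.
Set Implicit Arguments. Unset Strict Implicit. Unset Printing Implicit Defensive.

(* Let B \subset P (up to conjugacy) and w \notin P.  Pick x = s m in N of
   minimal length inside the (B, P)-double coset BwP.  The exchange property
   of BN-pairs puts BsB (BmP) inside BwP, while BmP is another double coset;
   as |BsB| >= q|B| this gives |BwP| >= q|P|, hence
   |wP :&: Pw| = |P|^2 / |PwP| <= |P| / q.
   The map (a, p, p') |-> (ap, p'a) on (A :\: P) x P x P has fibres embedding
   into such intersections, so q |A :\: P| |P| <= |AP| |PA|, which gives the
   dichotomy.  For APA, Cauchy-Schwarz bounds |APA| below by |A|^4 |P|^2
   divided by the number of solutions of apb = a'p'b'; for fixed a, a', b, b'
   the solutions p either number at most |P| / q or are counted by the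
   sigma_P terms.  The bound on PAB is |B a^-1 P| >= q|P|, inverted. *)

Lemma sq_sum_le (I : finType) (A : {pred I}) (F : I -> nat) :
  (\sum_(i in A) F i) ^ 2 <= #|A| * \sum_(i in A) F i ^ 2.
Proof.
have amgm (x y : nat) : 2 * (x * y) <= x ^ 2 + y ^ 2.
  by have := (nat_AGM2 x y).1; rewrite sqrnD => h; lia.
have double_sum : \sum_(i in A) \sum_(j in A) (F i ^ 2 + F j ^ 2) =
                  2 * (#|A| * \sum_(i in A) F i ^ 2).
  under eq_bigr => i _ do rewrite big_split /= sum_nat_const.
  by rewrite big_split /= -big_distrr /= sum_nat_const mul2n -addnn.
rewrite -(leq_pmul2l (isT : 0 < 2)) -double_sum -mulnn big_distrlr /=.
rewrite big_distrr /=; apply: leq_sum => i _.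
by rewrite big_distrr /=; apply: leq_sum => j _.
Qed.

Lemma card_fibers (T U : finType) (E : {set T}) (Y : {set U}) (f : T -> U) :
  {in E, forall x, f x \in Y} ->
  #|E| = \sum_(y in Y) #|[set x in E | f x == y]|.
Proof.
move=> fEY; rewrite -sum1_card (partition_big f (mem Y)) //=.
by apply: eq_bigr => y _; rewrite -sum1_card; apply: eq_bigl => x; rewrite inE.
Qed.

Lemma leq_card_fibers (T U : finType) (E : {set T}) (Y : {set U}) (f : T -> U)
    (c : nat) (M : U -> nat) :
  {in E, forall x, f x \in Y} ->
  {in Y, forall y, c * #|[set x in E | f x == y]| <= M y} ->
  c * #|E| <= \sum_(y in Y) M y.
Proof. by move=> fEY hM; rewrite (card_fibers fEY) big_distrr; apply: leq_sum. Qed.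

Lemma card_sq_le_collisions (T U : finType) (E : {set T}) (Y : {set U}) (f : T -> U) :
  {in E, forall x, f x \in Y} ->
  #|E| ^ 2 <= #|Y| * #|[set xx in setX E E | f xx.1 == f xx.2]|.
Proof.
move=> fEY; set fib := fun y => #|[set x in E | f x == y]|.
have -> : #|[set xx in setX E E | f xx.1 == f xx.2]| = \sum_(y in Y) fib y ^ 2.
  rewrite (@card_fibers _ _ _ Y (fun xx => f xx.1)); last first.
    by move=> xx; rewrite !inE => /andP[/andP[/fEY]].
  apply: eq_bigr => y _; rewrite /fib -mulnn -cardsX; apply: eq_card => -[x x'].
  rewrite !inE /=; case: (f x =P y) => [->|_]; last by rewrite !andbF.
  by rewrite !andbT andbA eq_sym.
by have := sq_sum_le (mem Y) fib; rewrite -(card_fibers fEY).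
Qed.

Lemma sum_indicator (T : finType) (X : {set T}) (c : pred T) :
  \sum_(x in X) (c x : nat) = #|[set x in X | c x]|.
Proof.
rewrite -sum1_card big_mkcond [RHS]big_mkcond /=; apply: eq_bigr => x _.
by rewrite inE; case: (x \in X); case: (c x).
Qed.

Local Open Scope group_scope.

Lemma sigmaS_card (gT : finGroupType) (P X Y : {set gT}) :
  sigmaS P X Y = #|[set xy in setX X Y | xy.1 * xy.2 \in P]|.
Proof.
rewrite (@card_fibers _ _ _ P (fun xy : gT * gT => xy.1 * xy.2)); last first.
  by move=> xy; rewrite inE => /andP[].
apply: eq_bigr => z zP; apply: eq_card => -[x y]; rewrite !inE /=.
by case: eqP => [->|]; rewrite ?zP ?andbT ?andbF.
Qed.

Lemma card_lquot_le_sigmaS (gT : finGroupType) (P A : {set gT}) :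
  #|[set aa in setX A A | aa.2^-1 * aa.1 \in P]| <= sigmaS P A^-1 A.
Proof.
have swap_inj : injective (fun aa : gT * gT => (aa.2^-1, aa.1)).
  by move=> [a a'] [b b'] [/invg_inj-> ->].
rewrite sigmaS_card -(card_imset _ swap_inj).
apply/subset_leq_card/subsetP=> _ /imsetP[[a a'] + ->].
by rewrite !inE /= => /andP[/andP[aA a'A] aaP]; rewrite invgK a'A aA.
Qed.

Lemma card_rquot_le_sigmaS (gT : finGroupType) (P A : {set gT}) :
  #|[set aa in setX A A | aa.1 * aa.2^-1 \in P]| <= sigmaS P A A^-1.
Proof.
have inv2_inj : injective (fun aa : gT * gT => (aa.1, aa.2^-1)).
  by move=> [a a'] [b b'] [-> /invg_inj->].
rewrite sigmaS_card -(card_imset _ inv2_inj).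
apply/subset_leq_card/subsetP=> _ /imsetP[[a a'] + ->].
by rewrite !inE /= => /andP[/andP[aA a'A] aaP]; rewrite invgK a'A aA.
Qed.

Lemma sigmaS_VA_gt0 (gT : finGroupType) (P : {group gT}) (A : {set gT}) :
  A != set0 -> 0 < sigmaS P A^-1 A.
Proof.
case/set0Pn=> a aA; rewrite sigmaS_card; apply/card_gt0P; exists (a^-1, a).
by rewrite !inE /= invgK aA mulVg group1.
Qed.

Lemma sigmaS_AV_gt0 (gT : finGroupType) (P : {group gT}) (A : {set gT}) :
  A != set0 -> 0 < sigmaS P A A^-1.
Proof.
case/set0Pn=> a aA; rewrite sigmaS_card; apply/card_gt0P; exists (a, a^-1).
by rewrite !inE /= invgK aA mulgV group1.
Qed.

Section DoubleCosets.
Variables (gT : finGroupType) (H K : {group gT}).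
Implicit Types x y z : gT.

Lemma dcosetP x z :
  reflect (exists h k, [/\ h \in H, k \in K & z = h * x * k]) (z \in H :* x * K).
Proof.
apply: (iffP idP) => [/mulsgP[y k] | [h [k [hH kK ->]]]].
  by rewrite mem_rcoset => yxH kK ->; exists (y * x^-1), k; rewrite mulgKV.
by rewrite mem_mulg // mem_rcoset mulgK.
Qed.

Lemma mem_dcoset h x k : h \in H -> k \in K -> h * x * k \in H :* x * K.
Proof. by move=> hH kK; apply/dcosetP; exists h, k. Qed.

Lemma dcoset_refl x : x \in H :* x * K.
Proof. by have := mem_dcoset x (group1 H) (group1 K); rewrite mulg1 mul1g. Qed.

Lemma dcoset_transl x y : y \in H :* x * K -> H :* y * K = H :* x * K.
Proof.
case/dcosetP=> h [k [hH kK ->]]; apply/setP=> z; apply/dcosetP/dcosetP.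
  case=> h1 [k1 [h1H k1K ->]]; exists (h1 * h), (k * k1).
  by rewrite !groupM // !mulgA.
case=> h1 [k1 [h1H k1K ->]]; exists (h1 * h^-1), (k^-1 * k1).
by rewrite !groupM ?groupV // !mulgA mulgK mulgKV.
Qed.

Lemma dcoset_sym x y : y \in H :* x * K -> x \in H :* y * K.
Proof. by move/dcoset_transl->; apply: dcoset_refl. Qed.

Lemma dcoset_mull h x z : h \in H -> z \in H :* x * K -> h * z \in H :* x * K.
Proof. by move=> hH /dcosetP[h1 [k [h1H kK ->]]]; rewrite !mulgA mem_dcoset ?groupM. Qed.

Lemma dcoset_mulr k x z : k \in K -> z \in H :* x * K -> z * k \in H :* x * K.
Proof. by move=> kK /dcosetP[h [k1 [hH k1K ->]]]; rewrite -mulgA mem_dcoset ?groupM. Qed.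

End DoubleCosets.

Lemma dcosetV (gT : finGroupType) (H K : {group gT}) (x z : gT) :
  z \in H :* x * K -> z^-1 \in K :* x^-1 * H.
Proof. by case/dcosetP=> h [k [hH kK ->]]; rewrite !invMg mulgA mem_dcoset ?groupV. Qed.

Lemma gen_mul_closed (gT : finGroupType) (A Z : {set gT}) :
  (forall a z, a \in A -> z \in Z -> a * z \in Z) ->
  forall x z, x \in <<A>> -> z \in Z -> x * z \in Z.
Proof.
move=> AZ x z /gen_prodgP[n [c cA ->]]; elim: n c cA z => [|n IHn] c cA z zZ.
  by rewrite big_ord0 mul1g.
by rewrite big_ord_recl -mulgA AZ // IHn.
Qed.

Lemma meet_cosetsJ (gT : finGroupType) (P : {set gT}) (w g : gT) :
  (w *: P :&: P :* w) :^ g = w ^ g *: P :^ g :&: P :^ g :* w ^ g.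
Proof.
apply/setP=> y; rewrite mem_conjg !inE !mem_lcoset !mem_rcoset !mem_conjg.
by rewrite conjMg conjVg conjgK conjMg conjVg conjgK.
Qed.

(* Each c in wP :&: Pw factors p w p' as (p c w^-1) w (c^-1 w p'). *)
Lemma card_dcoset_mul_meet (gT : finGroupType) (P : {group gT}) (w : gT) :
  #|P :* w * P| * #|w *: P :&: P :* w| <= #|P| ^ 2.
Proof.
rewrite -mulnn -(cardsX P P).
rewrite (@card_fibers _ _ (setX P P) (P :* w * P) (fun pp => pp.1 * w * pp.2)); last first.
  by move=> pp; rewrite inE => /andP[pP p'P]; apply: mem_dcoset.
rewrite -sum_nat_const; apply: leq_sum => _ /dcosetP[p [p' [pP p'P ->]]].
pose h c := (p * c * w^-1, c^-1 * w * p').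
have h_inj : injective h by move=> c c' [/mulIg/mulgI].
rewrite -(card_imset _ h_inj); apply/subset_leq_card/subsetP=> _ /imsetP[c + ->].
rewrite inE mem_lcoset mem_rcoset => /andP[wcP cwP].
have wcP' : c^-1 * w \in P by rewrite -groupV invMg invgK.
rewrite !inE /= -mulgA (groupM pP cwP) (groupM wcP' p'P) /=.
by rewrite !mulgA mulgKV mulgK.
Qed.

Definition triple_energy (gT : finGroupType) (A P : {set gT}) :=
  [set tt in setX (setX (setX A P) A) (setX (setX A P) A) |
     tt.1.1.1 * tt.1.1.2 * tt.1.2 == tt.2.1.1 * tt.2.1.2 * tt.2.2].

Section SmallMeets.
Variables (gT : finGroupType) (G P : {group gT}) (q : nat).
Hypotheses (sPG : P \subset G)
  (small_meets : {in G :\: P, forall w, q * #|w *: P :&: P :* w| <= #|P|}).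
Implicit Types (A : {set gT}) (u v : gT).

Lemma small_meets_lr u v : u \in G -> u \notin P -> q * #|u *: P :&: P :* v| <= #|P|.
Proof.
move=> uG uP; case: (set_0Vmem (u *: P :&: P :* v)) => [->|[w]].
  by rewrite cards0 muln0.
rewrite inE => /andP[wuP wPv].
rewrite -(lcoset_eqP wuP) -(rcoset_eqP wPv) small_meets //.
move: wuP; rewrite mem_lcoset => uwP.
by rewrite inE -(mulKVg u w) (groupMr _ uwP) uP groupM // (subsetP sPG).
Qed.

Lemma card_sandwich_in u v : u \in G ->
  q * #|[set p in P | u * p * v \in P]| <= q * #|P| * ((u \in P) * (v \in P)) + #|P|.
Proof.
move=> uG; have [uP | uP] := boolP (u \in P).
  have [vP | vP] := boolP (v \in P).
    rewrite muln1 (leq_trans _ (leq_addr _ _)) // leq_mul2l subset_leq_card ?orbT //.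
    by apply/subsetP=> p; rewrite inE => /andP[].
  suff -> : [set p in P | u * p * v \in P] = set0 by rewrite cards0 muln0.
  apply/setP=> p; rewrite !inE; case: (boolP (p \in P)) => //= pP.
  by rewrite groupMl ?groupM // (negbTE vP).
rewrite mul0n muln0 add0n (leq_trans _ (small_meets_lr v^-1 uG uP)) //.
rewrite leq_mul2l -(card_imset _ (mulgI u)) subset_leq_card ?orbT //.
apply/subsetP=> _ /imsetP[p + ->]; rewrite !inE => /andP[pP upvP].
by rewrite mem_lcoset mem_rcoset invgK mulKg pP.
Qed.

Lemma card_AP_PA A : A \subset G -> q * #|A :\: P| * #|P| <= #|A * P| * #|P * A|.
Proof.
move=> sAG; pose f (t : gT * gT * gT) := (t.1.1 * t.1.2, t.2 * t.1.1).
have : q * #|setX (setX (A :\: P) P) P| <= \sum_(z in setX (A * P) (P * A)) #|P|.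
  apply: (@leq_card_fibers _ _ _ _ f).
    move=> [[a p] p']; rewrite !inE /=.
    by case/andP=> /andP[/andP[_ aA] pP] p'P; rewrite !mem_mulg.
  move=> z _; set F := [set t in _ | _].
  case: (set_0Vmem F) => [->|[[[a0 p0] p0'] t0F]]; first by rewrite cards0 muln0.
  move: (t0F); rewrite !inE /= => /andP[/andP[/andP[/andP[a0P a0A] p0P] p0'P] /eqP z0].
  have F_inj : {in F &, injective (fun t => t.1.1)}.
    move=> [[a p] p'] [[a' r] r']; rewrite !inE /= -z0.
    move=> /andP[_ /eqP[e1 e2]] /andP[_ /eqP[e1' e2']] /= ea.
    by move: e1' e2'; rewrite -ea -e1 -e2 => /mulgI-> /mulIg->.
  have a0GP : a0 \in G :\: P by rewrite inE a0P (subsetP sAG).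
  rewrite -(card_in_imset F_inj); apply: leq_trans (small_meets a0GP).
  rewrite leq_mul2l subset_leq_card ?orbT //.
  apply/subsetP=> _ /imsetP[[[a p] p'] + ->]; rewrite !inE /= -z0.
  move=> /andP[/andP[/andP[_ pP] p'P] /eqP[e1 e2]].
  rewrite mem_lcoset mem_rcoset.
  have -> : a0^-1 * a = p0 * p^-1 by apply: (canRL (mulgK p)); rewrite -mulgA e1 mulKg.
  have -> : a * a0^-1 = p'^-1 * p0' by rewrite -[a](mulKg p') e2 mulgA mulgK.
  by rewrite !groupM ?groupV.
move=> h; rewrite sum_nat_const !cardsX in h.
rewrite -(leq_pmul2r (cardG_gt0 P)); lia.
Qed.

Lemma card_mulg_dichotomy A : A \subset G ->
  #|A| ^ 2 <= 2 * (#|A * P| * #|A :&: P|) \/ #|A| * #|P| * q <= 4 * (#|A * P| * #|P * A|).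
Proof.
move=> sAG; have AP_PA := card_AP_PA sAG; have splitA := cardsID P A.
have A_AP : #|A| <= #|A * P| by apply/subset_leq_card/mulg_subl/group1.
have [small | big] := leqP #|A| (2 * #|A :&: P|).
  by left; rewrite -mulnn mulnCA leq_mul.
right; have AIP_lt : #|A :&: P| < #|A :\: P|.
  by rewrite -(ltn_add2l #|A :&: P|) addnn -mul2n splitA.
have A_le : #|A| <= 2 * #|A :\: P| by rewrite -splitA mul2n -addnn leq_add2r ltnW.
have := leq_mul (leq_mul A_le (leqnn #|P|)) (leqnn q) => h; nia.
Qed.

Lemma triple_energy_le_sum A : A \subset G ->
  q * #|triple_energy A P| <=
  \sum_(z in setX (setX A A) (setX A A))
     (q * #|P| * (((z.1.2^-1 * z.1.1)%g \in P) * ((z.2.1 * z.2.2^-1)%g \in P)) + #|P|).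
Proof.
move=> sAG; pose g (tt : gT * gT * gT * (gT * gT * gT)) :=
  ((tt.1.1.1, tt.2.1.1), (tt.1.2, tt.2.2)).
apply: (@leq_card_fibers _ _ _ _ g).
  move=> [[[a p] b] [[a' p'] b']]; rewrite !inE /=.
  by case/andP=> /andP[/andP[/andP[-> _] ->] /andP[/andP[-> _] ->]].
move=> [[a a'] [b b']]; rewrite !inE /= => /andP[/andP[aA a'A] /andP[bA b'A]].
set F := [set tt in _ | _].
have F_inj : {in F &, injective (fun tt => tt.1.1.2)}.
  move=> [[[a1 p1] b1] [[a1' p1'] b1']] [[[a2 p2] b2] [[a2' p2'] b2']].
  rewrite !inE /= => /andP[/andP[_ /eqP e1] /eqP[ea1 ea1' eb1 eb1']].
  move=> /andP[/andP[_ /eqP e2] /eqP[ea2 ea2' eb2 eb2']] /= p12.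
  subst a1 a1' b1 b1' a2 a2' b2 b2' p2.
  by move: e2; rewrite e1 => /mulIg/mulgI->.
rewrite -(card_in_imset F_inj).
apply: leq_trans (card_sandwich_in (u := a'^-1 * a) (b * b'^-1) _); last first.
  by rewrite groupM ?groupV ?(subsetP sAG).
rewrite leq_mul2l subset_leq_card ?orbT //.
apply/subsetP=> _ /imsetP[[[[a1 p1] b1] [[a1' p1'] b1']] + ->]; rewrite !inE /=.
case/andP=> /andP[/andP[/andP[/andP[_ p1P] _] /andP[/andP[_ p1'P] _]] /eqP e].
move=> /eqP[ea ea' eb eb']; rewrite {}ea {}ea' {}eb {}eb' in e *; rewrite p1P /=.
suff -> : a'^-1 * a * p1 * (b * b'^-1) = p1' by [].
transitivity (a'^-1 * (a * p1 * b) * b'^-1); first by rewrite !mulgA.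
by rewrite e !mulgA mulVg mul1g mulgK.
Qed.

Lemma sum_sandwich_le_sigmaS A :
  \sum_(z in setX (setX A A) (setX A A))
     (q * #|P| * (((z.1.2^-1 * z.1.1)%g \in P) * ((z.2.1 * z.2.2^-1)%g \in P)) + #|P|)
  <= q * #|P| * (sigmaS P A^-1 A * sigmaS P A A^-1) + #|A| ^ 4 * #|P|.
Proof.
rewrite big_split /= -big_distrr /= sum_nat_const !cardsX.
have -> : \sum_(z in setX (setX A A) (setX A A))
            (((z.1.2^-1 * z.1.1)%g \in P) * ((z.2.1 * z.2.2^-1)%g \in P)) =
          ((\sum_(aa in setX A A) ((aa.2^-1 * aa.1)%g \in P : nat)) *
           (\sum_(bb in setX A A) ((bb.1 * bb.2^-1)%g \in P : nat)))%N.
  by rewrite big_distrlr pair_big /=; apply: eq_bigl => z; rewrite !inE.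
rewrite !sum_indicator; apply: leq_add; last by rewrite eq_leq //; ring.
by rewrite leq_mul2l leq_mul ?card_lquot_le_sigmaS ?card_rquot_le_sigmaS ?orbT.
Qed.

Lemma card_APA_energy A : A \subset G ->
  q * #|A| ^ 4 * #|P| <=
  #|A * P * A| * (q * (sigmaS P A^-1 A * sigmaS P A A^-1) + #|A| ^ 4).
Proof.
move=> sAG.
have energy := leq_trans (triple_energy_le_sum sAG) (sum_sandwich_le_sigmaS A).
have := @card_sq_le_collisions _ _ (setX (setX A P) A) (A * P * A)
  (fun t => t.1.1 * t.1.2 * t.2).
rewrite !cardsX -/(triple_energy A P) => collisions.
have {}collisions : (#|A| * #|P| * #|A|) ^ 2 <= #|A * P * A| * #|triple_energy A P|.
  apply: collisions => -[[a p] b]; rewrite !inE /=.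
  by case/andP=> /andP[aA pP] bA; rewrite !mem_mulg.
rewrite -(leq_pmul2r (cardG_gt0 P)).
apply: leq_trans (_ : q * (#|A * P * A| * #|triple_energy A P|) <= _).
  rewrite (_ : _ * #|P| = q * (#|A| * #|P| * #|A|) ^ 2)%N; last by ring.
  by rewrite leq_mul2l collisions orbT.
rewrite mulnCA -mulnA leq_mul2l (leq_trans energy) ?orbT //.
by rewrite eq_leq //; ring.
Qed.

End SmallMeets.

Section BNPair.
Variables (gT : finGroupType) (G B N : {group gT}) (S : {set gT}).
Hypothesis BN : is_BN_pair G B N S.
Implicit Types (b n m s t u v w x y z : gT).

Local Notation T := (B :&: N).

Lemma BN_G_gen : G :=: <<B :|: N>>. Proof. by case: BN. Qed.
Lemma BN_T_normal : T <| N. Proof. by case: BN. Qed.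
Lemma BN_S_sub : S \subset N. Proof. by case: BN => _ _ []. Qed.
Lemma BN_N_gen : N :=: <<S :|: T>>. Proof. by case: BN => _ _ []. Qed.

Lemma BN_S_notT s : s \in S -> s \notin T.
Proof. by case: BN => _ _ [_ S_inv _] _ _ /S_inv[]. Qed.

Lemma BN_S_sqr s : s \in S -> s * s \in T.
Proof. by case: BN => _ _ [_ S_inv _] _ _ /S_inv[]. Qed.

Lemma BN_S_mulB_sub s n : s \in S -> n \in N ->
  s *: B :* n \subset B :* n * B :|: B :* (s * n) * B.
Proof. by case: BN => _ _ _ BN4 _; apply: BN4. Qed.

Lemma memS_N s : s \in S -> s \in N. Proof. exact: subsetP BN_S_sub s. Qed.

Lemma memT_conj t n : t \in T -> n \in N -> t ^ n \in T.
Proof. by move=> tT nN; rewrite memJ_norm // (subsetP (normal_norm BN_T_normal)). Qed.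

Lemma BN_lmul s b n : s \in S -> b \in B -> n \in N ->
  s * b * n \in B :* n * B \/ s * b * n \in B :* (s * n) * B.
Proof.
move=> sS bB nN; have : s * b * n \in s *: B :* n by rewrite mem_rcoset mulgK mem_lcoset mulKg.
by move/(subsetP (BN_S_mulB_sub sS nN)); rewrite inE => /orP[]; [left | right].
Qed.

Lemma BN_rmul w b t : t \in S -> b \in B -> w \in N ->
  w * b * t \in B :* w * B \/ w * b * t \in B :* (w * t) * B.
Proof.
move=> tS bB wN; have ttB : t * t \in B by case/setIP: (BN_S_sqr tS).
have -> : w * b * t = (t * b^-1 * w^-1)^-1 * (t * t).
  by rewrite !invMg !invgK !mulgA mulgKV.
have wt_dc : w * t^-1 \in B :* (w * t) * B.
  have -> : w * t^-1 = w * t * (t * t)^-1 by rewrite invMg mulgA mulgK.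
  by apply: dcoset_mulr; rewrite ?groupV // dcoset_refl.
case: (BN_lmul tS (groupVr bB) (groupVr wN)) => /dcosetV; rewrite ?invMg !invgK => h.
  by left; apply: dcoset_mulr.
by right; apply: dcoset_mulr; rewrite // -(dcoset_transl wt_dc).
Qed.

Lemma BN_lmul_dcoset s y z : s \in S -> y \in N -> z \in B :* y * B ->
  s * z \in B :* y * B \/ s * z \in B :* (s * y) * B.
Proof.
move=> sS yN /dcosetP[b1 [b2 [b1B b2B ->]]]; rewrite !mulgA.
by case: (BN_lmul sS b1B yN) => ?; [left | right]; apply: dcoset_mulr.
Qed.

Lemma dcoset_mulS s u v : s \in S -> u \in B :* s * B -> v \in B :* s * B ->
  u * v \in B \/ u * v \in B :* s * B.
Proof.
move=> sS /dcosetP[b1 [b2 [b1B b2B ->]]] /dcosetP[b3 [b4 [b3B b4B ->]]].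
have -> : b1 * s * b2 * (b3 * s * b4) = b1 * (s * (b2 * b3) * s) * b4 by rewrite !mulgA.
case: (BN_lmul sS (groupM b2B b3B) (memS_N sS)) => [s_dc | ss_dc].
  by right; apply: dcoset_mulr => //; apply: dcoset_mull.
have ssB : s * s \in B by case/setIP: (BN_S_sqr sS).
by left; rewrite rcoset_id // mulGid in ss_dc; rewrite groupMr // groupMl.
Qed.

Lemma invS_dcoset s : s \in S -> s^-1 \in B :* s * B.
Proof.
move=> sS; have -> : s^-1 = s * (s * s)^-1 by rewrite invMg mulgA mulgV mul1g.
by rewrite dcoset_mulr ?dcoset_refl // groupV; case/setIP: (BN_S_sqr sS).
Qed.

Lemma bruhat_decomposition g : g \in G -> exists2 n, n \in N & g \in B :* n * B.
Proof.
pose U := [set z | [exists n in N, z \in B :* n * B]].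
have U_closed a z : a \in S :|: B -> z \in U -> a * z \in U.
  rewrite !inE => /orP[aS | aB] /exists_inP[n nN zn]; apply/exists_inP.
    case: (BN_lmul_dcoset aS nN zn) => ?; first by exists n.
    by exists (a * n) => //; exact: groupM (memS_N aS) nN.
  by exists n; rewrite ?dcoset_mull.
have G_sub : G \subset <<S :|: B>>.
  rewrite BN_G_gen gen_subG subUset sub_gen ?subsetUr //= BN_N_gen genS // setUS //.
  exact: subsetIl.
move=> gG; have : g * 1 \in U.
  apply: (gen_mul_closed U_closed (subsetP G_sub g gG)).
  by rewrite inE; apply/exists_inP; exists 1; rewrite ?dcoset_refl.
by rewrite mulg1 inE => /exists_inP[n nN gn]; exists n.
Qed.

(* The preimage in N of the elements of length at most k of the Weyl group N/T. *)
Fixpoint Nlen k : {set gT} := if k is k'.+1 then Nlen k' :|: S * Nlen k' else T.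

Lemma Nlen_subS k : Nlen k \subset Nlen k.+1. Proof. exact: subsetUl. Qed.

Lemma Nlen_lmulS k s x : s \in S -> x \in Nlen k -> s * x \in Nlen k.+1.
Proof. by move=> sS xk; rewrite inE mem_mulg ?orbT. Qed.

Lemma Nlen_sub k : Nlen k \subset N.
Proof.
elim: k => [|k IHk] /=; first exact: subsetIr.
rewrite subUset IHk; apply/subsetP=> _ /mulsgP[s x sS xk ->].
exact: groupM (memS_N sS) (subsetP IHk x xk).
Qed.

Lemma Nlen_rmulT k x t : x \in Nlen k -> t \in T -> x * t \in Nlen k.
Proof.
elim: k x => [|k IHk] x /=; first exact: groupM.
rewrite inE => /orP[xk tT | /mulsgP[s y sS yk ->] tT]; first by rewrite inE IHk.
by rewrite -mulgA Nlen_lmulS ?IHk.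
Qed.

Lemma Nlen_lmulT k x t : x \in Nlen k -> t \in T -> t * x \in Nlen k.
Proof.
elim: k x t => [|k IHk] x t /=; first by move=> xT tT; rewrite groupM.
rewrite inE => /orP[xk tT | /mulsgP[s y sS yk ->] tT]; first by rewrite inE IHk.
have -> : t * (s * y) = s * (t ^ s * y) by rewrite !mulgA mulgV mul1g.
by apply/Nlen_lmulS/IHk; rewrite ?memT_conj ?memS_N.
Qed.

Lemma Nlen_rmulS k x s : s \in S -> x \in Nlen k -> x * s \in Nlen k.+1.
Proof.
move=> sS; elim: k x => [|k IHk] x /=.
  by move=> xT; rewrite conjgC inE; apply/orP; right; rewrite mem_mulg ?memT_conj ?memS_N.
rewrite inE => /orP[xk | /mulsgP[s' y s'S yk ->]]; first by rewrite inE IHk.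
by rewrite -mulgA inE; apply/orP; right; rewrite mem_mulg ?IHk.
Qed.

Lemma NlenSl k x : x \in Nlen k.+1 ->
  x \in Nlen k \/ exists s y, [/\ s \in S, y \in Nlen k & x = s * y].
Proof. by rewrite inE => /orP[xk | /mulsgP[s y sS yk ->]]; [left | right; exists s, y]. Qed.

Lemma NlenSr k x : x \in Nlen k.+1 ->
  x \in Nlen k \/ exists y t, [/\ y \in Nlen k, t \in S & x = y * t].
Proof.
elim: k x => [|k IHk] x.
  case/NlenSl=> [xT | [s [y [sS yT ->]]]]; first by left.
  right; exists (y ^ s^-1), s; rewrite -conjgCV; split=> //.
  by rewrite memT_conj ?groupV ?memS_N.
case/NlenSl=> [xk | [s [y [sS yk ->]]]]; first by left.
case: (IHk y yk) => [yk' | [y' [t [y'k tS ->]]]]; first by left; apply: Nlen_lmulS.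
by right; exists (s * y'), t; rewrite mulgA Nlen_lmulS.
Qed.

Lemma N_Nlen n : n \in N -> exists k, n \in Nlen k.
Proof.
rewrite BN_N_gen => /gen_prodgP[m [c cST ->]].
elim: m c cST => [|m IHm] c cST; first by exists 0; rewrite big_ord0 /= group1.
rewrite big_ord_recl; have [k ck] := IHm _ (fun i => cST (lift ord0 i)).
move: (cST ord0); rewrite inE => /orP[c0S | c0T].
  by exists k.+1; apply: Nlen_lmulS.
by exists k; apply: Nlen_lmulT.
Qed.

Lemma bruhat_uniq x y : x \in N -> y \in N -> x \in B :* y * B -> x^-1 * y \in T.
Proof.
case/N_Nlen=> k; elim: k x y => [|k IHk] x y xk yN.
  move=> xy; case/setIP: (xk) => xB xN.
  have yB : y \in B by case/dcoset_sym/dcosetP: xy => b1 [b2 [b1B b2B ->]]; rewrite !groupM.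
  by rewrite inE (groupMr _ yB) (groupMr _ yN) !groupV xB xN.
case/NlenSl: xk => [xk | [s [x' [sS x'k ->]]]] xy; first exact: IHk.
have x'N := subsetP (Nlen_sub k) x' x'k; have sN := memS_N sS.
have ssT := BN_S_sqr sS; have ssB : s * s \in B by case/setIP: ssT.
have x'_dc : x' \in B :* y * B \/ x' \in B :* (s * y) * B.
  have -> : x' = s * ((s * s)^-1 * (s * x')) by rewrite invMg -mulgA mulKg mulKVg.
  by apply: BN_lmul_dcoset => //; apply: dcoset_mull; rewrite ?groupV.
case: x'_dc => [x'_y | x'_sy].
  have : x'^-1 * (s * x') \in T by apply: IHk; rewrite ?groupM // (dcoset_transl xy).
  rewrite -conjgE => /memT_conj/(_ (groupVr x'N)).
  by rewrite conjgK (negbTE (BN_S_notT sS)).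
have -> : (s * x')^-1 * y = (s * s)^-1 ^ x' * (x'^-1 * (s * y)).
  by rewrite conjgE !invMg !mulgA mulgK mulgKV.
exact: groupM (memT_conj (groupVr ssT) x'N) (IHk x' (s * y) x'k (groupM sN yN) x'_sy).
Qed.

Lemma lmulS_dcoset_long k s m b : s \in S -> m \in Nlen k -> s * m \notin Nlen k ->
  b \in B -> s * b * m \in B :* (s * m) * B.
Proof.
move=> sS; have sN := memS_N sS; elim: k m => [|k IHk] m mk smk bB.
  case/setIP: mk => mB _; have := mem_dcoset (s * m) (group1 B) (groupJ bB mB).
  by rewrite mul1g conjgE !mulgA mulgK.
have mN := subsetP (Nlen_sub _) m mk.
case/NlenSr: (mk) => [mk' | [m' [t [m'k tS def_m]]]].
  by apply: IHk => //; apply: contra smk; apply/subsetP/Nlen_subS.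
have sm'k : s * m' \notin Nlen k.
  by apply: contra smk => sm'k; rewrite def_m mulgA Nlen_rmulS.
have sm'N : s * m' \in N by rewrite groupM // (subsetP (Nlen_sub k)).
have /dcosetP[b1 [b2 [b1B b2B sbm']]] := IHk m' m'k sm'k bB.
have def_sbm : s * b * m = b1 * (s * m' * b2 * t) by rewrite def_m !mulgA sbm' !mulgA.
case: (BN_rmul tS b2B sm'N) => [sm'_dc | sm_dc]; last first.
  by rewrite def_sbm; rewrite -[s * m' * t]mulgA -def_m in sm_dc; apply: dcoset_mull.
case: (BN_lmul sS bB mN) => [sbm_m | //]; case/negP: smk.
have sbm_sm' : s * b * m \in B :* (s * m') * B by rewrite def_sbm dcoset_mull.
have m_sm' : m \in B :* (s * m') * B.
  by rewrite -(dcoset_transl sbm_sm') (dcoset_transl sbm_m) dcoset_refl.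
have uT := bruhat_uniq mN sm'N m_sm'.
have -> : s * m = (s * s) * (m' * (m^-1 * (s * m'))^-1).
  by rewrite !invMg !invgK !mulgA mulgK mulgK.
by apply/(subsetP (Nlen_subS k))/Nlen_lmulT/BN_S_sqr/sS; rewrite Nlen_rmulT ?groupV.
Qed.

Lemma dcosetS_inv s u : s \in S -> u \in B :* s * B -> u^-1 \in B :* s * B.
Proof. by move=> sS /dcosetV; rewrite (dcoset_transl (invS_dcoset sS)). Qed.

Lemma card_dcosetS_mul s (X : {set gT}) (q : nat) : s \in S ->
  B * X \subset X -> {in B :* s * B * X, forall z, z \notin X} ->
  q * #|B| <= #|B :* s * B| -> q * #|X| <= #|B :* s * B * X|.
Proof.
move=> sS BX_X sX_X Sq; rewrite -(leq_pmul2r (cardG_gt0 B)).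
apply: leq_trans (_ : #|setX (B :* s * B) X| <= _).
  by rewrite cardsX mulnAC leq_mul.
rewrite -sum_nat_const -[#|_|]mul1n.
apply: (@leq_card_fibers _ _ _ _ (fun ux : gT * gT => ux.1 * ux.2)).
  by move=> ux; rewrite inE => /andP[u_dc xX]; apply: mem_mulg.
move=> z _; rewrite mul1n; set F := [set ux in _ | _].
case: (set_0Vmem F) => [->|[[u0 x0] ux0F]]; first by rewrite cards0.
move: ux0F; rewrite !inE /= => /andP[/andP[u0_dc x0X] /eqP z0].
have F_inj : {in F &, injective (fun ux : gT * gT => ux.2)}.
  move=> [u x] [u' x']; rewrite !inE /= => /andP[_ /eqP e] /andP[_ /eqP e'] ex.
  by rewrite -ex in e' *; rewrite (mulIg _ _ _ (etrans e (esym e'))).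
rewrite -(card_in_imset F_inj) -(card_rcoset B x0) subset_leq_card //.
apply/subsetP=> _ /imsetP[[u x] + ->]; rewrite !inE /= => /andP[/andP[u_dc xX] /eqP e].
have def_x : x = u^-1 * u0 * x0 by rewrite -mulgA z0 -e mulKg.
(* u^-1 u0 lies in B or in BsB, and the latter would put x in BsB X. *)
case: (dcoset_mulS sS (dcosetS_inv sS u_dc) u0_dc) => [uu0B | uu0_dc].
  by rewrite mem_rcoset def_x mulgK.
have : x \notin X by apply: sX_X; rewrite def_x mem_mulg.
by rewrite xX.
Qed.

Lemma dcoset_descent (P : {group gT}) a : B \subset P -> a \in G -> a \notin P ->
  exists s m, [/\ s \in S, m \notin B :* a * P
                 & B :* s * B * (B :* m * P) \subset B :* a * P].
Proof.
move=> sBP aG aP.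
have exk : exists k, [exists x in Nlen k, x \in B :* a * P].
  have [n nN /dcoset_sym/dcosetP[b1 [b2 [b1B b2B def_n]]]] := bruhat_decomposition aG.
  have [k nk] := N_Nlen nN; exists k; apply/exists_inP; exists n => //.
  by rewrite def_n mem_dcoset // (subsetP sBP).
(* Take x in N :&: BaP of minimal length, x = s m: minimality gives m \notin BaP. *)
case: (ex_minnP exk) => -[|k] /exists_inP[x xk xaP] min_k.
  case/negP: aP; case/dcoset_sym/dcosetP: xaP => b [p [bB pP ->]].
  by rewrite !groupM // (subsetP sBP) //; case/setIP: xk.
have not_aP y : y \in Nlen k -> y \notin B :* a * P.
  move=> yk; apply/negP=> yaP; suff : k.+1 <= k by rewrite ltnn.
  by apply: min_k; apply/exists_inP; exists y.
case/NlenSl: xk => [xk | [s [m [sS mk def_x]]]]; first by case/negP: (not_aP x xk).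
have smk : s * m \notin Nlen k by rewrite -def_x; apply/negP=> /not_aP; rewrite xaP.
exists s, m; split; rewrite ?not_aP //.
apply/subsetP=> _ /mulsgP[u y /dcosetP[b1 [b2 [b1B b2B ->]]] /dcosetP[b3 [p [b3B pP ->]]] ->].
have := lmulS_dcoset_long sS mk smk (groupM b2B b3B).
case/dcosetP=> c1 [c2 [c1B c2B def_sbm]].
have -> : b1 * s * b2 * (b3 * m * p) = (b1 * c1) * (s * m) * (c2 * p).
  transitivity (b1 * (s * (b2 * b3) * m) * p); first by rewrite !mulgA.
  by rewrite def_sbm !mulgA.
by rewrite -(dcoset_transl xaP) def_x mem_dcoset ?groupM // (subsetP sBP).
Qed.

Lemma card_dcoset_BP (P : {group gT}) (q : nat) a : BN_params_ge B S q ->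
  B \subset P -> a \in G -> a \notin P -> q * #|P| <= #|B :* a * P|.
Proof.
move=> Sq sBP aG aP; have [s [m [sS maP sub_aP]]] := dcoset_descent sBP aG aP.
have BX_X : B * (B :* m * P) \subset B :* m * P.
  by apply/subsetP=> _ /mulsgP[b y bB yX ->]; apply: dcoset_mull.
have sX_X : {in B :* s * B * (B :* m * P), forall z, z \notin B :* m * P}.
  move=> z zsX; apply: contra maP => zX.
  by rewrite -(dcoset_transl (subsetP sub_aP z zsX)) (dcoset_transl zX) dcoset_refl.
apply: leq_trans (subset_leq_card sub_aP).
apply: leq_trans (card_dcosetS_mul sS BX_X sX_X (Sq s sS)).
rewrite leq_mul2l -(card_lcoset P m) subset_leq_card ?orbT //.
by apply/subsetP=> _ /lcosetP[p pP ->]; have := mem_dcoset m (group1 B) pP; rewrite mul1g.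
Qed.

Lemma small_meets_parabolic (P : {group gT}) (q : nat) : BN_params_ge B S q ->
  parabolic G B P -> {in G :\: P, forall w, q * #|w *: P :&: P :* w| <= #|P|}.
Proof.
move=> Sq [_ [g gG sBgP]] w /setDP[wG wP].
rewrite -(cardJg _ g^-1) meet_cosetsJ -(cardJg P g^-1).
set Q := (P :^ g^-1)%G; have sBQ : B \subset Q by rewrite /= -sub_conjg.
have wQ : w ^ g^-1 \notin Q by rewrite /= memJ_conjg.
have wgG : w ^ g^-1 \in G by rewrite groupJ ?groupV.
rewrite -(leq_pmul2l (cardG_gt0 Q)) mulnCA mulnn.
apply: leq_trans (card_dcoset_mul_meet Q (w ^ g^-1)); rewrite mulnA leq_mul2r.
apply/orP; right; apply: leq_trans (card_dcoset_BP Sq sBQ wgG wQ) _.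
by apply/subset_leq_card/mulSg/subsetP=> x; rewrite !mem_rcoset; apply: (subsetP sBQ).
Qed.

Lemma card_PAB (P : {group gT}) (q : nat) (A : {set gT}) : BN_params_ge B S q ->
  B \subset P -> A \subset G -> ~~ (A \subset P) -> q * #|P| <= #|P * A * B|.
Proof.
move=> Sq sBP sAG /subsetPn[a aA aP].
have a'P : a^-1 \notin P by rewrite groupV.
apply: leq_trans (card_dcoset_BP Sq sBP (groupVr (subsetP sAG a aA)) a'P) _.
rewrite -card_invg subset_leq_card //; apply/subsetP=> z; rewrite mem_invg.
by move/dcosetV; rewrite !invgK => /dcosetP[p [b [pP bB ->]]]; rewrite !mem_mulg.
Qed.

End BNPair.

Lemma sub_PJ (gT : finGroupType) (B N : {group gT}) (J : {set gT}) : B \subset PJ B N J.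
Proof.
apply/subsetP=> b bB; rewrite -[b]mulg1 -[b in b * 1]mulg1.
by rewrite !mem_mulg ?group1.
Qed.

Section RealBounds.
Local Open Scope ring_scope.

Lemma half_sqrt_le_max (R : rcfType) (x y z : nat) : (x <= 4 * (y * z))%N ->
  2^-1 * Num.sqrt x%:R <= Num.max y%:R z%:R :> R.
Proof.
move=> xyz; set m := Num.max _ _.
have ym : y%:R <= m by rewrite le_max lexx.
have zm : z%:R <= m by rewrite le_max lexx orbT.
have sqrt_le : Num.sqrt x%:R <= 2 * m.
  rewrite -(ler_pXn2r (isT : (0 < 2)%N)) ?nnegrE ?sqrtr_ge0 ?sqr_sqrtr ?ler0n //; last first.
    by rewrite mulr_ge0 // (le_trans (ler0n _ y)).
  have y0 := ler0n R y; have z0 := ler0n R z.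
  by apply: le_trans (_ : (4 * (y * z))%:R <= _); rewrite ?ler_nat // !natrM; nra.
by rewrite ler_pdivrMl ?ltr0n.
Qed.

Lemma half_min_le_max (R : rcfType) (a p q ap pa i : nat) : (0 < a)%N ->
  (a ^ 2 <= 2 * (ap * i) \/ a * p * q <= 4 * (ap * pa))%N ->
  2^-1 * (if i == 0%N then Num.sqrt (a%:R * p%:R * q%:R)
          else Num.min (a%:R ^+ 2 / i%:R) (Num.sqrt (a%:R * p%:R * q%:R)))
    <= Num.max ap%:R pa%:R :> R.
Proof.
rewrite -!natrM => a_gt0 [a2_le | apq_le].
  have i_gt0 : (0 < i)%N.
    by move: a2_le; case: (posnP i) => // ->; rewrite muln0 leqn0 expn_eq0 andbT eqn0Ngt a_gt0.
  rewrite eqn0Ngt i_gt0 /=.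
  apply: le_trans (_ : 2^-1 * (a%:R ^+ 2 / i%:R) <= _).
    by rewrite ler_wpM2l ?invr_ge0 ?ler0n // ge_min lexx.
  apply: le_trans (_ : ap%:R <= _); last by rewrite le_max lexx.
  rewrite mulrC !ler_pdivrMr ?ltr0n // -natrX -!natrM ler_nat; lia.
apply: le_trans (half_sqrt_le_max R apq_le); rewrite ler_wpM2l ?invr_ge0 ?ler0n //.
by case: ifP => _; rewrite ?ge_min ?lexx ?orbT.
Qed.

Lemma quarter_min_le (R : realFieldType) (pp q a4 e1 e2 apa : R) :
  0 <= pp -> 0 <= q -> 0 <= a4 -> 0 < e1 -> 0 < e2 -> 0 <= apa ->
  q * a4 * pp <= apa * (q * (e1 * e2) + a4) ->
  pp / 4 * Num.min q (a4 / e1 / e2) <= apa.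
Proof.
move=> pp0 q0 a40 e10 e20 apa0 energy; set e : R := e1 * e2 in energy *.
have e0 : 0 < e by rewrite mulr_gt0.
have qe0 : 0 <= q * e by apply: mulr_ge0 => //; apply: ltW.
set m : R := Num.min _ _; have mq : m <= q by rewrite ge_min lexx.
have me : m * e <= a4.
  by rewrite -ler_pdivlMr // /e invfM mulrA ge_min lexx orbT.
have m0 : 0 <= m by rewrite le_min q0 !divr_ge0 // ltW.
have mqa : m * (q * e + a4) <= 2 * (q * a4).
  have h1 : q * (m * e) <= q * a4 := ler_wpM2l q0 me.
  have h2 : m * a4 <= q * a4 := ler_wpM2r a40 mq.
  lra.
have key : pp * m * (q * e + a4) <= 2 * apa * (q * e + a4).
  have h3 : pp * (m * (q * e + a4)) <= pp * (2 * (q * a4)) := ler_wpM2l pp0 mqa.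
  lra.
have [s0 | s_neq0] := eqVneq (q * e + a4) 0.
  move/eqP: s0; rewrite paddr_eq0 // => /andP[_ /eqP a4_0].
  have m_le0 : m <= 0 by rewrite -(pmulr_lle0 _ e0) -a4_0.
  suff -> : m = 0 by rewrite mulr0.
  by apply/le_anti; rewrite m_le0 m0.
have s_pos : 0 < q * e + a4 by rewrite lt0r s_neq0 addr_ge0.
rewrite ler_pM2r // in key; lra.
Qed.

End RealBounds.

Theorem theorem12 (gT : finGroupType) (G B N : {group gT}) (S : {set gT}) (q : nat)
    (R : rcfType) :
  is_BN_pair G B N S -> BN_params_ge B S q ->
  (forall (P : {group gT}) (A : {set gT}),
     parabolic G B P -> P \proper G -> A \subset G -> A != set0 ->
     [/\ (#|A| ^ 2 <= 2 * (#|(A * P)%g| * #|A :&: P|)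
            \/ #|A| * #|P| * q <= 4 * (#|(A * P)%g| * #|(P * A)%g|))%N,
         (2%:R^-1 *
            (if #|A :&: P| == 0%N
             then Num.sqrt (#|A|%:R * #|P|%:R * q%:R)
             else Num.min (#|A|%:R ^+ 2 / #|A :&: P|%:R)
                          (Num.sqrt (#|A|%:R * #|P|%:R * q%:R)))
          <= Num.max #|(A * P)%g|%:R #|(P * A)%g|%:R :> R)%R
       & (#|P|%:R / 4%:R *
            Num.min q%:R (#|A|%:R ^+ 4 / (sigmaS P (A^-1)%g A)%:R
                                      / (sigmaS P A (A^-1)%g)%:R)
          <= #|(A * P * A)%g|%:R :> R)%R]) /\
  (forall (J : {set gT}) (P : {group gT}) (A : {set gT}),
     J \subset S -> P :=: PJ B N J -> A \subset G -> ~~ (A \subset P) ->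
     (q * #|P| <= #|(P * A * B)%g|)%N).
Proof.
move=> BN Sq; split=> [P A Ppar _ sAG A_neq0 | J P A _ defP sAG AP]; last first.
  by apply: (card_PAB BN Sq) sAG AP; rewrite defP sub_PJ.
have sPG : P \subset G by case: Ppar.
have small := small_meets_parabolic BN Sq Ppar.
have dichotomy := card_mulg_dichotomy sPG small sAG.
split=> //; first by apply: (half_min_le_max R _ dichotomy); rewrite card_gt0.
have := card_APA_energy sPG small sAG.
rewrite -(ler_nat R) !(natrM, natrD, natrX) => energy.
by apply: (quarter_min_le _ _ _ _ _ _ energy); rewrite ?exprn_ge0 ?ler0n ?ltr0n ?sigmaS_VA_gt0 ?sigmaS_AV_gt0.
Qed.
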